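(* Every Hamiltonian surface in the Brady complex $X$ contains every triangle of $X$.
   Context: The Brady complex $X$ is the simply connected CAT(0) piecewise Euclidean 2-complex (constructed by T. Brady) on which $\mathrm{Aut}(F_2)$ acts properly and cocompactly by cellular isometries. Its closed 2-cells (faces) are unit equilateral triangles and unit lozenges (rhombi with angles $\pi/3$ and $2\pi/3$); every edge of $X$ lies in exactly three faces: one triangle and two lozenges. A Hamiltonian surface in $X$ is a connected union $\Sigma$ of closed faces of $X$ which is a surface without boundary, contains every vertex and every edge of $X$, and has no multiple vertex (at every vertex the faces of $\Sigma$ containing it form a single disk). *)

(* A combinatorial model of the Brady complex X.  Notation: B_4 is given by the
   Birman-Ko-Lee (dual) presentation on the six atoms a_ts (4 >= t > s >= 1),
   with Garside element delta = a43 a32 a21.  *)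
From Stdlib Require Import List ZArith.
Import ListNotations.

Inductive atom : Type := a21 | a31 | a41 | a32 | a42 | a43.

(* a letter is an atom or its inverse (true = inverse) *)
Definition letter : Type := (atom * bool)%type.
Definition word : Type := list letter.

Definition pos (a : atom) : letter := (a, false).
Definition ngt (a : atom) : letter := (a, true).
Definition linv (l : letter) : letter := (fst l, negb (snd l)).
Definition winv (w : word) : word := rev (map linv w).

(* Defining relations of the BKL presentation of B_4, as pairs of positive words:
   (1) a_ts a_rq = a_rq a_ts  when (t-r)(t-q)(s-r)(s-q) > 0
       (here: {a43,a21} and {a41,a32});
   (2) a_ts a_sr = a_tr a_ts = a_sr a_tr  for t > s > r. *)
Definition bkl_rel (l r : word) : Prop :=
  (l = [pos a43; pos a21] /\ r = [pos a21; pos a43]) \/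
  (l = [pos a41; pos a32] /\ r = [pos a32; pos a41]) \/
  (exists ts sr tr : atom,
     (* (t,s,r) = (3,2,1), (4,2,1), (4,3,1), (4,3,2) respectively *)
     ((ts, sr, tr) = (a32, a21, a31) \/ (ts, sr, tr) = (a42, a21, a41) \/
      (ts, sr, tr) = (a43, a31, a41) \/ (ts, sr, tr) = (a43, a32, a42)) /\
     ((l = [pos ts; pos sr] /\ r = [pos tr; pos ts]) \/
      (l = [pos tr; pos ts] /\ r = [pos sr; pos tr]))).

Inductive bstep : word -> word -> Prop :=
  | bstep_cancel : forall p q x, bstep (p ++ [x; linv x] ++ q) (p ++ q)
  | bstep_rel : forall p q l r, bkl_rel l r -> bstep (p ++ l ++ q) (p ++ r ++ q).

Inductive beq : word -> word -> Prop :=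
  | beq_refl : forall w, beq w w
  | beq_step : forall u v, bstep u v -> beq u v
  | beq_sym : forall u v, beq u v -> beq v u
  | beq_trans : forall u v w, beq u v -> beq v w -> beq u w.

Definition delta : word := [pos a43; pos a32; pos a21].

Definition dpow (k : Z) : word :=
  match k with
  | Z0 => []
  | Zpos p => concat (repeat delta (Pos.to_nat p))
  | Zneg p => concat (repeat (winv delta) (Pos.to_nat p))
  end.

(* Vertices of X: right cosets g<delta> of B_4; g represents the vertex [g]. *)
Definition vsame (g h : word) : Prop := exists k : Z, beq h (g ++ dpow k).

(* Side atoms (chords joining cyclically adjacent points); the two diagonal
   atoms a31, a42 give diagonals of lozenges, not edges of X. *)
Definition side (a : atom) : Prop := a = a21 \/ a = a32 \/ a = a43 \/ a = a41.

Record edge : Type := Edge { e_base : word; e_atom : atom }.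
Definition isEdge (e : edge) : Prop := side (e_atom e).
Definition e_src (e : edge) : word := e_base e.
Definition e_tgt (e : edge) : word := e_base e ++ [pos (e_atom e)].

Definition edgeEq (e f : edge) : Prop :=
  (vsame (e_src e) (e_src f) /\ vsame (e_tgt e) (e_tgt f)) \/
  (vsame (e_src e) (e_tgt f) /\ vsame (e_tgt e) (e_src f)).

(* Tri g x y z : equilateral triangle with vertices [g],[gx],[gxy], where
                 x,y,z are side atoms with x y z = delta.
   Loz g u v   : lozenge with vertices [g],[gu],[guv],[gv], where {u,v} is
                 one of the commuting pairs {a43,a21}, {a41,a32}. *)
Inductive face : Type :=
  | Tri : word -> atom -> atom -> atom -> face
  | Loz : word -> atom -> atom -> face.

Definition isFace (F : face) : Prop :=
  match F with
  | Tri g x y z => side x /\ side y /\ side z /\ beq [pos x; pos y; pos z] delta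
  | Loz g u v => (u = a43 /\ v = a21) \/ (u = a21 /\ v = a43) \/
                 (u = a41 /\ v = a32) \/ (u = a32 /\ v = a41)
  end.

Definition isTriangle (F : face) : Prop :=
  match F with Tri _ _ _ _ => True | Loz _ _ _ => False end.

Definition face_vertices (F : face) : list word :=
  match F with
  | Tri g x y z => [g; g ++ [pos x]; g ++ [pos x; pos y]]
  | Loz g u v => [g; g ++ [pos u]; g ++ [pos u; pos v]; g ++ [pos v]]
  end.

Definition face_edges (F : face) : list edge :=
  match F with
  | Tri g x y z => [Edge g x; Edge (g ++ [pos x]) y; Edge (g ++ [pos x; pos y]) z]
  | Loz g u v => [Edge g u; Edge (g ++ [pos u]) v; Edge g v; Edge (g ++ [pos v]) u]
  end.

Definition vIn (g : word) (F : face) : Prop :=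
  exists h, In h (face_vertices F) /\ vsame g h.
Definition eIn (e : edge) (F : face) : Prop :=
  exists f, In f (face_edges F) /\ edgeEq e f.
Definition vOnEdge (g : word) (e : edge) : Prop :=
  vsame g (e_src e) \/ vsame g (e_tgt e).

Definition faceEq (F G : face) : Prop :=
  (forall h, In h (face_vertices F) -> vIn h G) /\
  (forall h, In h (face_vertices G) -> vIn h F).

(* A set of faces of X is represented by a predicate on face data which is
   closed under change of representative. *)
Definition faceSet (S : face -> Prop) : Prop :=
  (forall F, S F -> isFace F) /\
  (forall F G, S F -> isFace G -> faceEq F G -> S G).

Inductive chain (R : face -> face -> Prop) : face -> face -> Prop :=
  | chain_refl : forall F, chain R F F
  | chain_step : forall F G H, R F G -> chain R G H -> chain R F H.

Definition HamiltonianSurface (S : face -> Prop) : Prop :=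
  faceSet S /\
  (forall F G, S F -> S G ->
     chain (fun A B => S A /\ S B /\ exists g, vIn g A /\ vIn g B) F G) /\
  (forall g : word, exists F, S F /\ vIn g F) /\
  (forall e, isEdge e -> exists F, S F /\ eIn e F) /\
  (* surface without boundary: every edge of S lies in exactly two faces of S *)
  (forall e, isEdge e -> (exists F, S F /\ eIn e F) ->
     exists F1 F2, S F1 /\ S F2 /\ eIn e F1 /\ eIn e F2 /\ ~ faceEq F1 F2 /\
       forall F, S F -> eIn e F -> faceEq F F1 \/ faceEq F F2) /\
  (* no multiple vertex: at each vertex g the faces of S containing g form a
     single disk, i.e. they are connected through edges of S at g *)
  (forall g F G, S F -> S G -> vIn g F -> vIn g G ->
     chain (fun A B => S A /\ S B /\ vIn g A /\ vIn g B /\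
              exists e, isEdge e /\ vOnEdge g e /\ eIn e A /\ eIn e B) F G).

(* The vertices of X are the cosets g<delta> of the braid group B_4 in its
   Birman-Ko-Lee presentation, and the star of every vertex is a translate of
   the star of the vertex [[]]: twelve faces (four triangles and eight
   lozenges) around eight edges, each edge lying in one triangle and two
   lozenges.  A Hamiltonian surface contains exactly two of the three faces at
   each such edge and, having no multiple vertex, meets the link of each vertex
   (edges as vertices, faces as edges, a cubic graph on eight vertices) in a
   Hamiltonian cycle.  Running through all subsets of the twelve faces yields
   three local rules, and if a triangle at w were missing, the rules at w,
   w a41 and w a41 a43 would contradict each other on a lozenge shared by w and
   w a41 a43.  The finitely many facts about the star are checked by
   computation: equalities of vertices by positive rewriting modulo delta,
   inequalities by the exponent sum and a representation of B_4 over F_3. *)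

From Stdlib Require Import List ZArith Lia Bool Setoid Morphisms ClassicalEpsilon.
Import ListNotations.

(** * Equality in B_4 *)

#[local] Instance beq_equivalence : Equivalence beq.
Proof. split; [exact beq_refl | exact beq_sym | exact beq_trans]. Qed.

Lemma bstep_context p q u v : bstep u v -> bstep (p ++ u ++ q) (p ++ v ++ q).
Proof.
  intros [p0 q0 x | p0 q0 l r Hr].
  - replace (p ++ (p0 ++ [x; linv x] ++ q0) ++ q)
      with ((p ++ p0) ++ [x; linv x] ++ (q0 ++ q)) by now rewrite <- !app_assoc.
    replace (p ++ (p0 ++ q0) ++ q) with ((p ++ p0) ++ (q0 ++ q)) by now rewrite <- !app_assoc.
    constructor.
  - replace (p ++ (p0 ++ l ++ q0) ++ q) with ((p ++ p0) ++ l ++ (q0 ++ q))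
      by now rewrite <- !app_assoc.
    replace (p ++ (p0 ++ r ++ q0) ++ q) with ((p ++ p0) ++ r ++ (q0 ++ q))
      by now rewrite <- !app_assoc.
    now constructor.
Qed.

Lemma beq_context p q u v : beq u v -> beq (p ++ u ++ q) (p ++ v ++ q).
Proof.
  induction 1.
  - reflexivity.
  - now apply beq_step, bstep_context.
  - now symmetry.
  - etransitivity; eassumption.
Qed.

#[local] Instance app_beq_proper : Proper (beq ==> beq ==> beq) (@app letter).
Proof.
  intros u u' Hu v v' Hv. transitivity (u' ++ v).
  - exact (beq_context [] v u u' Hu).
  - pose proof (beq_context u' [] v v' Hv) as H. now rewrite !app_nil_r in H.
Qed.

Lemma linv_involutive l : linv (linv l) = l.
Proof. destruct l as [a b]; unfold linv; simpl; now rewrite negb_involutive. Qed.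

Lemma winv_involutive w : winv (winv w) = w.
Proof.
  unfold winv. rewrite map_rev, rev_involutive, map_map.
  rewrite <- (map_id w) at 2. apply map_ext, linv_involutive.
Qed.

Lemma winv_app u v : winv (u ++ v) = winv v ++ winv u.
Proof. unfold winv. now rewrite map_app, rev_app_distr. Qed.

Lemma letter_cancel l : beq [l; linv l] [].
Proof. apply beq_step. exact (bstep_cancel [] [] l). Qed.

Lemma app_winv_r w : beq (w ++ winv w) [].
Proof.
  induction w as [|l w IH]; [reflexivity|].
  replace ((l :: w) ++ winv (l :: w)) with ([l] ++ (w ++ winv w) ++ [linv l])
    by (unfold winv; simpl; now rewrite <- !app_assoc).
  rewrite IH. apply letter_cancel.
Qed.

Lemma app_winv_l w : beq (winv w ++ w) [].
Proof. rewrite <- (winv_involutive w) at 2. apply app_winv_r. Qed.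

Lemma app_winv_r_cancel w s : beq (w ++ winv w ++ s) s.
Proof. now rewrite app_assoc, app_winv_r. Qed.

Lemma app_winv_l_cancel w s : beq (winv w ++ w ++ s) s.
Proof. now rewrite app_assoc, app_winv_l. Qed.

#[local] Instance winv_beq_proper : Proper (beq ==> beq) winv.
Proof.
  intros u v H.
  transitivity (winv u ++ u ++ winv v).
  - rewrite <- (app_nil_r (winv u)) at 1. rewrite <- (app_winv_r v).
    apply app_beq_proper; [reflexivity|]. apply app_beq_proper; [symmetry; exact H|reflexivity].
  - apply app_winv_l_cancel.
Qed.

Definition bkl_relations : list (word * word) :=
  [ ([pos a43; pos a21], [pos a21; pos a43]);
    ([pos a41; pos a32], [pos a32; pos a41]);
    ([pos a32; pos a21], [pos a31; pos a32]); ([pos a31; pos a32], [pos a21; pos a31]);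
    ([pos a42; pos a21], [pos a41; pos a42]); ([pos a41; pos a42], [pos a21; pos a41]);
    ([pos a43; pos a31], [pos a41; pos a43]); ([pos a41; pos a43], [pos a31; pos a41]);
    ([pos a43; pos a32], [pos a42; pos a43]); ([pos a42; pos a43], [pos a32; pos a42]) ].

Ltac pick_disjunct := solve [repeat first [left; reflexivity | right]; reflexivity].

Lemma bkl_rel_In l r : bkl_rel l r <-> In (l, r) bkl_relations.
Proof.
  split.
  - intros [[-> ->] | [[-> ->] | (ts & sr & tr & Hs & Hlr)]]; simpl; try pick_disjunct.
    destruct Hs as [Hs | [Hs | [Hs | Hs]]]; injection Hs as -> -> ->;
      destruct Hlr as [[-> ->] | [-> ->]]; simpl; pick_disjunct.
  - unfold bkl_rel. simpl.
    intros H; repeat destruct H as [H | H]; try contradiction; injection H as <- <-;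
      first [ left; split; reflexivity | right; left; split; reflexivity
            | right; right; eexists _, _, _; split;
              [| (left + right); split; reflexivity];
              pick_disjunct ].
Qed.

Lemma bkl_relations_beq l r : In (l, r) bkl_relations -> beq l r.
Proof.
  intros H%bkl_rel_In. apply beq_step.
  pose proof (bstep_rel [] [] l r H) as Hs. now rewrite !app_nil_r in Hs.
Qed.

Definition letter_eq_dec : forall l l' : letter, {l = l'} + {l <> l'}.
Proof. repeat decide equality. Defined.

Definition word_eq_dec : forall u v : word, {u = v} + {u <> v} := list_eq_dec letter_eq_dec.

Fixpoint rewrite_at (l r w : word) : list word :=
  match w with
  | [] => []
  | x :: w' =>
      (if word_eq_dec (firstn (length l) w) l then [r ++ skipn (length l) w] else [])
      ++ map (cons x) (rewrite_at l r w')
  end.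

Definition rewrite_once (w : word) : list word :=
  flat_map (fun '(l, r) => rewrite_at l r w ++ rewrite_at r l w) bkl_relations.

Fixpoint explore (fuel : nat) (seen frontier : list word) : list word :=
  match fuel with
  | O => seen
  | S n =>
      let fresh := nodup word_eq_dec
        (filter (fun x => if in_dec word_eq_dec x seen then false else true)
           (flat_map rewrite_once frontier)) in
      match fresh with [] => seen | _ => explore n (fresh ++ seen) fresh end
  end.

Definition positive_class (u : word) : list word := explore 60 [u] [u].

Lemma rewrite_at_beq l r : beq l r -> forall w v, In v (rewrite_at l r w) -> beq w v.
Proof.
  intros Hlr w. induction w as [|x w IH]; intros v Hv; simpl in Hv; [contradiction|].
  apply in_app_or in Hv as [Hv | (v' & <- & Hv)%in_map_iff].
  - destruct word_eq_dec as [E|]; [|contradiction]. destruct Hv as [<- | []].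
    rewrite <- (firstn_skipn (length l) (x :: w)) at 1. rewrite E.
    apply app_beq_proper; [exact Hlr | reflexivity].
  - change (x :: w) with ([x] ++ w). change (x :: v') with ([x] ++ v'). now rewrite (IH v' Hv).
Qed.

Lemma rewrite_once_beq w v : In v (rewrite_once w) -> beq w v.
Proof.
  intros ((l, r) & Hrel & Hv)%in_flat_map. pose proof (bkl_relations_beq l r Hrel) as Hlr.
  apply in_app_or in Hv as [Hv | Hv].
  - exact (rewrite_at_beq l r Hlr w v Hv).
  - exact (rewrite_at_beq r l (symmetry Hlr) w v Hv).
Qed.

Lemma explore_beq u fuel : forall seen frontier,
  (forall x, In x seen -> beq u x) -> (forall x, In x frontier -> beq u x) ->
  forall x, In x (explore fuel seen frontier) -> beq u x.
Proof.
  induction fuel as [|n IH]; intros seen frontier Hseen Hfr x Hx; simpl in Hx; auto.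
  set (fresh := nodup _ _) in Hx.
  assert (Hfresh : forall y, In y fresh -> beq u y).
  { intros y (Hy & _)%nodup_In%filter_In. apply in_flat_map in Hy as (z & Hz & Hy).
    rewrite (Hfr z Hz). now apply rewrite_once_beq. }
  destruct fresh as [|y fresh]; auto.
  apply (IH _ _ (fun z Hz => or_ind (Hfresh z) (Hseen z) (in_app_or _ _ _ Hz)) Hfresh x Hx).
Qed.

Lemma positive_class_beq u v : In v (positive_class u) -> beq u v.
Proof.
  apply explore_beq; intros x [<- | []]; reflexivity.
Qed.

(** * Vertices of X *)

Definition rot_atom (a : atom) : atom :=
  match a with
  | a21 => a41 | a31 => a42 | a41 => a43 | a32 => a21 | a42 => a31 | a43 => a32
  end.

Definition rot_pow (n : nat) (w : word) : word :=
  map (fun l => (Nat.iter n rot_atom (fst l), snd l)) w.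

Lemma rot_pow_app n u v : rot_pow n (u ++ v) = rot_pow n u ++ rot_pow n v.
Proof. apply map_app. Qed.

Lemma rot_pow_add m n w : rot_pow m (rot_pow n w) = rot_pow (m + n) w.
Proof. unfold rot_pow. rewrite map_map. apply map_ext. intros l. now rewrite Nat.iter_add. Qed.

Lemma rot_pow_0 w : rot_pow 0 w = w.
Proof. unfold rot_pow. rewrite <- (map_id w) at 2. apply map_ext. now intros []. Qed.

Lemma rot_pow_4 w : rot_pow 4 w = w.
Proof. unfold rot_pow. rewrite <- (map_id w) at 2. apply map_ext. now intros [[] b]. Qed.

Lemma rot_pow_mod4 n w : rot_pow n w = rot_pow (n mod 4) w.
Proof.
  rewrite (Nat.div_mod_eq n 4) at 1. rewrite <- rot_pow_add.
  generalize (rot_pow (n mod 4) w). induction (n / 4) as [|q IH]; intros v.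
  - apply rot_pow_0.
  - replace (4 * S q) with (4 + 4 * q) by lia. now rewrite <- rot_pow_add, IH, rot_pow_4.
Qed.

Lemma delta_conj_atom a : beq (delta ++ [pos a]) ([pos (rot_atom a)] ++ delta).
Proof.
  apply positive_class_beq. destruct a; vm_compute; tauto.
Qed.

Lemma delta_conj_letter l : beq (delta ++ [l]) (rot_pow 1 [l] ++ delta).
Proof.
  destruct l as [a []]; [|apply delta_conj_atom].
  change (rot_pow 1 [(a, true)]) with (winv [pos (rot_atom a)]).
  change [(a, true)] with (winv [pos a]).
  transitivity (winv [pos (rot_atom a)] ++ ([pos (rot_atom a)] ++ delta) ++ winv [pos a]).
  - now rewrite <- app_assoc, app_winv_l_cancel.
  - rewrite <- delta_conj_atom, <- app_assoc, app_winv_r, app_nil_r. reflexivity.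
Qed.

Lemma delta_conj s : beq (delta ++ s) (rot_pow 1 s ++ delta).
Proof.
  induction s as [|l s IH]; [now rewrite app_nil_r|].
  change (l :: s) with ([l] ++ s). rewrite rot_pow_app, app_assoc, delta_conj_letter.
  now rewrite <- app_assoc, IH, app_assoc.
Qed.

Lemma delta_inv_conj s : beq (winv delta ++ s) (rot_pow 3 s ++ winv delta).
Proof.
  transitivity (winv delta ++ (delta ++ rot_pow 3 s) ++ winv delta).
  - now rewrite delta_conj, rot_pow_add, rot_pow_4, <- app_assoc, app_winv_r, app_nil_r.
  - now rewrite <- app_assoc, app_winv_l_cancel.
Qed.

Lemma concat_repeat_S (w : word) n : concat (repeat w (S n)) = concat (repeat w n) ++ w.
Proof.
  induction n as [|n IH]; [apply app_nil_r|].
  change (w ++ concat (repeat w (S n)) = (w ++ concat (repeat w n)) ++ w).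
  now rewrite IH, app_assoc.
Qed.

Lemma dpow_nat n : dpow (Z.of_nat n) = concat (repeat delta n).
Proof. destruct n; simpl; [reflexivity|]. now rewrite SuccNat2Pos.id_succ. Qed.

Lemma dpow_neg_nat n : dpow (- Z.of_nat n) = concat (repeat (winv delta) n).
Proof. destruct n; simpl; [reflexivity|]. now rewrite SuccNat2Pos.id_succ. Qed.

Lemma Z_nat_or_neg_nat k : exists n, k = Z.of_nat n \/ k = (- Z.of_nat n)%Z.
Proof. exists (Z.abs_nat k). lia. Qed.

Lemma dpow_succ k : beq (dpow (Z.succ k)) (dpow k ++ delta).
Proof.
  destruct (Z_nat_or_neg_nat k) as [n [-> | ->]].
  - now rewrite <- Nat2Z.inj_succ, !dpow_nat, concat_repeat_S.
  - destruct n as [|n]; [reflexivity|].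
    replace (Z.succ (- Z.of_nat (S n))) with (- Z.of_nat n)%Z by lia.
    now rewrite !dpow_neg_nat, concat_repeat_S, <- app_assoc, app_winv_l, app_nil_r.
Qed.

Lemma dpow_pred k : beq (dpow (Z.pred k)) (dpow k ++ winv delta).
Proof.
  rewrite <- (Z.succ_pred k) at 2.
  now rewrite dpow_succ, <- app_assoc, app_winv_r, app_nil_r.
Qed.

Lemma dpow_add a b : beq (dpow a ++ dpow b) (dpow (a + b)).
Proof.
  induction b as [|b IH|b IH] using Z.peano_ind.
  - now rewrite app_nil_r, Z.add_0_r.
  - now rewrite Z.add_succ_r, !dpow_succ, app_assoc, IH.
  - now rewrite Z.add_pred_r, !dpow_pred, app_assoc, IH.
Qed.

Lemma dpow_opp k : beq (dpow k ++ dpow (- k)) [].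
Proof. now rewrite dpow_add, Z.add_opp_diag_r. Qed.

Lemma dpow_conj k : exists n, forall s, beq (dpow k ++ s) (rot_pow n s ++ dpow k).
Proof.
  induction k as [|k [n IH]|k [n IH]] using Z.peano_ind.
  - exists 0. intros s. now rewrite rot_pow_0, app_nil_r.
  - exists (n + 1). intros s.
    rewrite !dpow_succ, <- app_assoc, delta_conj, app_assoc, IH, rot_pow_add.
    now rewrite <- app_assoc.
  - exists (n + 3). intros s.
    rewrite !dpow_pred, <- app_assoc, delta_inv_conj, app_assoc, IH, rot_pow_add.
    now rewrite <- app_assoc.
Qed.

#[local] Instance vsame_equivalence : Equivalence vsame.
Proof.
  split.
  - intros x. exists 0%Z. now rewrite app_nil_r.
  - intros x y [k H]. exists (- k)%Z. now rewrite H, <- app_assoc, dpow_opp, app_nil_r.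
  - intros x y z [a Ha] [b Hb]. exists (a + b)%Z. now rewrite Hb, Ha, <- app_assoc, dpow_add.
Qed.

#[local] Instance vsame_beq_proper : Proper (beq ==> beq ==> iff) vsame.
Proof.
  intros x x' Hx y y' Hy. unfold vsame. now setoid_rewrite Hx; setoid_rewrite Hy.
Qed.

Lemma vsame_of_beq x y : beq x y -> vsame x y.
Proof. intros H. now rewrite H. Qed.

Lemma vsame_delta x s : vsame (x ++ delta ++ s) (x ++ rot_pow 1 s).
Proof.
  symmetry. exists 1%Z. change (dpow 1) with (delta ++ []).
  now rewrite app_nil_r, <- app_assoc, delta_conj.
Qed.

Lemma vsame_delta_inv x s : vsame (x ++ winv delta ++ s) (x ++ rot_pow 3 s).
Proof.
  symmetry. exists (-1)%Z. change (dpow (-1)) with (winv delta ++ []).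
  now rewrite app_nil_r, <- app_assoc, delta_inv_conj.
Qed.

(* Changing the representative of a vertex twists whatever follows it by a
   power of the Garside automorphism. *)
Lemma vsame_shift x y : vsame x y -> exists j, j < 4 /\ forall s, vsame (x ++ s) (y ++ rot_pow j s).
Proof.
  intros [k Hk]. destruct (dpow_conj (- k)) as [n Hn].
  exists (n mod 4). split; [apply Nat.mod_upper_bound; lia|]. intros s.
  symmetry. exists (- k)%Z. rewrite <- rot_pow_mod4, <- app_assoc, <- Hn, app_assoc.
  now rewrite Hk, <- (app_assoc x), dpow_opp, app_nil_r.
Qed.

(** * Certified comparison of vertices *)

Definition exponent_sum (w : word) : Z :=
  fold_right (fun (l : letter) (z : Z) => ((if snd l then -1 else 1) + z)%Z) 0%Z w.

Lemma exponent_sum_app u v : exponent_sum (u ++ v) = (exponent_sum u + exponent_sum v)%Z.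
Proof. induction u as [|l u IH]; simpl; [reflexivity|]. rewrite IH. lia. Qed.

Lemma exponent_sum_beq u v : beq u v -> exponent_sum u = exponent_sum v.
Proof.
  induction 1 as [| u v [p q [a []] | p q l r Hr] | |]; try congruence;
    rewrite !exponent_sum_app; simpl; try lia.
  apply bkl_rel_In in Hr. simpl in Hr.
  repeat destruct Hr as [Hr | Hr]; try contradiction; injection Hr as <- <-; reflexivity.
Qed.

Lemma exponent_sum_dpow k : exponent_sum (dpow k) = (3 * k)%Z.
Proof.
  induction k as [|k IH|k IH] using Z.peano_ind; [reflexivity| |].
  - rewrite (exponent_sum_beq _ _ (dpow_succ k)), exponent_sum_app, IH.
    change (exponent_sum delta) with 3%Z. lia.
  - rewrite (exponent_sum_beq _ _ (dpow_pred k)), exponent_sum_app, IH.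
    change (exponent_sum (winv delta)) with (-3)%Z. lia.
Qed.

(* A linear representation of B_4 on F_3^4 in which every atom has order 3,
   so that an inverse atom acts as its square. *)
Inductive F3 : Type := f0 | f1 | f2.

Definition F3_val (x : F3) : nat := match x with f0 => 0 | f1 => 1 | f2 => 2 end.
Definition F3_of_nat (n : nat) : F3 :=
  match n mod 3 with 0 => f0 | 1 => f1 | _ => f2 end.

Definition vec : Type := (F3 * F3 * F3 * F3)%type.
Definition row : Type := (nat * nat * nat * nat)%type.

Definition vec_eq_dec : forall u v : vec, {u = v} + {u <> v}.
Proof. repeat decide equality. Defined.

Definition dot (r : row) (v : vec) : F3 :=
  let '(c1, c2, c3, c4) := r in let '(x1, x2, x3, x4) := v in
  F3_of_nat (c1 * F3_val x1 + c2 * F3_val x2 + c3 * F3_val x3 + c4 * F3_val x4).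

Definition atom_matrix (a : atom) : row * row * row * row :=
  match a with
  | a21 => ((1, 0, 0, 0), (0, 1, 0, 0), (0, 0, 0, 2), (0, 0, 1, 2))
  | a31 => ((1, 0, 0, 0), (0, 0, 1, 2), (0, 0, 1, 0), (0, 1, 2, 2))
  | a41 => ((0, 1, 1, 2), (0, 1, 0, 0), (0, 0, 1, 0), (1, 2, 2, 2))
  | a32 => ((1, 0, 0, 0), (0, 0, 2, 0), (0, 1, 2, 0), (0, 0, 0, 1))
  | a42 => ((0, 1, 2, 0), (0, 1, 0, 0), (1, 2, 2, 0), (0, 0, 0, 1))
  | a43 => ((0, 2, 0, 0), (1, 2, 0, 0), (0, 0, 1, 0), (0, 0, 0, 1))
  end.

Definition atom_act (a : atom) (v : vec) : vec :=
  let '(r1, r2, r3, r4) := atom_matrix a in (dot r1 v, dot r2 v, dot r3 v, dot r4 v).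

Definition letter_act (l : letter) (v : vec) : vec :=
  let '(a, inverse) := l in if inverse then atom_act a (atom_act a v) else atom_act a v.

Definition act (w : word) (v : vec) : vec := fold_left (fun v l => letter_act l v) w v.

Lemma act_app u w v : act (u ++ w) v = act w (act u v).
Proof. apply fold_left_app. Qed.

Definition all_vecs : list vec :=
  let F := [f0; f1; f2] in
  flat_map (fun x1 => flat_map (fun x2 => flat_map (fun x3 => map (fun x4 =>
    (x1, x2, x3, x4)) F) F) F) F.

Lemma all_vecs_complete v : In v all_vecs.
Proof.
  destruct v as [[[x1 x2] x3] x4]. unfold all_vecs.
  apply in_flat_map; exists x1; split; [destruct x1; simpl; tauto|].
  apply in_flat_map; exists x2; split; [destruct x2; simpl; tauto|].
  apply in_flat_map; exists x3; split; [destruct x3; simpl; tauto|].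
  apply in_map_iff; exists x4; split; [reflexivity | destruct x4; simpl; tauto].
Qed.

Definition same_action (u w : word) : bool :=
  forallb (fun v => if vec_eq_dec (act u v) (act w v) then true else false) all_vecs.

Lemma same_action_spec u w : same_action u w = true -> forall v, act u v = act w v.
Proof.
  intros H v. unfold same_action in H. rewrite forallb_forall in H.
  specialize (H v (all_vecs_complete v)). now destruct vec_eq_dec.
Qed.

Definition all_letters : list letter :=
  flat_map (fun a => [pos a; ngt a]) [a21; a31; a41; a32; a42; a43].

Lemma all_letters_complete l : In l all_letters.
Proof. destruct l as [[] []]; simpl; tauto. Qed.

Lemma act_check :
  forallb (fun '(l, r) => same_action l r) bkl_relations = true /\
  forallb (fun l => same_action [l; linv l] []) all_letters = true.
Proof. split; vm_compute; reflexivity. Qed.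

Lemma act_bstep u w : bstep u w -> forall v, act u v = act w v.
Proof.
  destruct act_check as [Hrel Hcan]. rewrite forallb_forall in Hrel, Hcan.
  intros [p q l | p q l r Hr] v; rewrite !act_app; f_equal.
  - change (act p v) with (act [] (act p v)) at 2.
    apply same_action_spec, (Hcan l (all_letters_complete l)).
  - apply same_action_spec. apply bkl_rel_In in Hr. exact (Hrel (l, r) Hr).
Qed.

Lemma act_beq u w : beq u w -> forall v, act u v = act w v.
Proof.
  induction 1 as [| u w H | u w _ IH | u w z _ IH1 _ IH2]; intros v; auto.
  - now apply act_bstep.
  - now rewrite IH1.
Qed.

Definition basis : list vec :=
  [(f1, f0, f0, f0); (f0, f1, f0, f0); (f0, f0, f1, f0); (f0, f0, f0, f1)].

(* If [g u] and [g w] were the same vertex, [g w = g u delta^k] with [3 k] the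
   difference of the exponent sums; then [w] and [u delta^k] would act alike. *)
Definition coset_separated (u w : word) : bool :=
  let d := (exponent_sum w - exponent_sum u)%Z in
  if Z.eqb (d mod 3) 0 then
    existsb (fun v => if vec_eq_dec (act w v) (act (u ++ dpow (d / 3)) v) then false else true)
      basis
  else true.

Lemma coset_separated_spec u w : coset_separated u w = true -> forall g, ~ vsame (g ++ u) (g ++ w).
Proof.
  intros H g [k Hk].
  pose proof (exponent_sum_beq _ _ Hk) as Hsum.
  rewrite !exponent_sum_app, exponent_sum_dpow in Hsum.
  unfold coset_separated in H.
  replace (exponent_sum w - exponent_sum u)%Z with (k * 3)%Z in H by lia.
  rewrite Z.mod_mul, Z.div_mul, Z.eqb_refl in H by lia.
  apply existsb_exists in H as (v & _ & Hv).
  destruct vec_eq_dec as [|Hne]; [discriminate|]. apply Hne.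
  pose proof (act_beq _ _ Hk (act (winv g) v)) as Hact.
  rewrite <- app_assoc, !act_app in Hact.
  rewrite <- !(act_app (winv g) g), (act_beq _ _ (app_winv_l g)) in Hact.
  now rewrite act_app.
Qed.

Definition delta_cofactor (a : atom) : word :=
  match a with
  | a21 => [pos a41; pos a43] | a31 => [pos a41; pos a32] | a41 => [pos a43; pos a32]
  | a32 => [pos a21; pos a41] | a42 => [pos a21; pos a43] | a43 => [pos a32; pos a21]
  end.

Lemma delta_cofactor_spec a : beq ([pos a] ++ delta_cofactor a) delta.
Proof. symmetry. apply positive_class_beq. destruct a; vm_compute; tauto. Qed.

Lemma vsame_inv_atom x a s :
  vsame (x ++ [ngt a] ++ s) (x ++ delta_cofactor a ++ rot_pow 3 s).
Proof.
  rewrite (app_assoc x (delta_cofactor a)), <- vsame_delta_inv, <- !app_assoc.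
  apply vsame_of_beq. apply app_beq_proper; [reflexivity|].
  rewrite app_assoc. apply app_beq_proper; [|reflexivity].
  change [ngt a] with (winv [pos a]).
  now rewrite <- delta_cofactor_spec, winv_app, app_winv_r_cancel.
Qed.

(* [to_positive k w] is a positive word representing [rot_pow k w] up to a
   right factor in <delta>: each inverse atom is traded for its cofactor
   followed by [delta^-1], which is pushed to the end. *)
Fixpoint to_positive (k : nat) (w : word) : word :=
  match w with
  | [] => []
  | (a, false) :: w' => pos (Nat.iter k rot_atom a) :: to_positive k w'
  | (a, true) :: w' => delta_cofactor (Nat.iter k rot_atom a) ++ to_positive (3 + k) w'
  end.

Lemma to_positive_spec w : forall k g, vsame (g ++ rot_pow k w) (g ++ to_positive k w).
Proof.
  induction w as [|[a []] w IH]; intros k g; simpl; [reflexivity| |].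
  - change (g ++ (Nat.iter k rot_atom a, true) :: rot_pow k w)
      with (g ++ [ngt (Nat.iter k rot_atom a)] ++ rot_pow k w).
    rewrite vsame_inv_atom, rot_pow_add, !app_assoc. apply IH.
  - specialize (IH k (g ++ [pos (Nat.iter k rot_atom a)])). now rewrite <- !app_assoc in IH.
Qed.

Fixpoint free_reduce (w : word) : word :=
  match w with
  | [] => []
  | l :: s =>
      match free_reduce s with
      | l' :: s' => if letter_eq_dec l' (linv l) then s' else l :: l' :: s'
      | [] => [l]
      end
  end.

Lemma free_reduce_beq w : beq w (free_reduce w).
Proof.
  induction w as [|l s IH]; simpl; [reflexivity|].
  change (l :: s) with ([l] ++ s).
  transitivity ([l] ++ free_reduce s); [apply app_beq_proper; [reflexivity | exact IH]|].
  destruct (free_reduce s) as [|l' s']; [reflexivity|].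
  destruct letter_eq_dec as [-> | _]; [|reflexivity].
  change ([l] ++ linv l :: s') with ([l; linv l] ++ s'). now rewrite letter_cancel.
Qed.

Definition delta_words : list word := positive_class delta.

(* Deletes factors [delta] and [delta^-1] spelled by three consecutive letters,
   twisting the rest of the word accordingly; this keeps the positive words
   handled by [coset_equal] short. *)
Fixpoint strip_delta (fuel : nat) (w : word) : word :=
  match fuel, w with
  | S n, l :: w' =>
      if in_dec word_eq_dec (winv (firstn 3 w)) delta_words then
        strip_delta n (rot_pow 3 (skipn 3 w))
      else if in_dec word_eq_dec (firstn 3 w) delta_words then
        strip_delta n (rot_pow 1 (skipn 3 w))
      else l :: strip_delta n w'
  | _, _ => w
  end.

Lemma strip_delta_spec n : forall w g, vsame (g ++ w) (g ++ strip_delta n w).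
Proof.
  induction n as [|n IH]; intros [|l w'] g; try reflexivity.
  set (w := l :: w'). change (strip_delta (S n) w) with
    (if in_dec word_eq_dec (winv (firstn 3 w)) delta_words then
       strip_delta n (rot_pow 3 (skipn 3 w))
     else if in_dec word_eq_dec (firstn 3 w) delta_words then
       strip_delta n (rot_pow 1 (skipn 3 w))
     else l :: strip_delta n w').
  rewrite <- (firstn_skipn 3 w) at 1.
  destruct in_dec as [Hinv | _]; [|destruct in_dec as [Hd | _]].
  - apply positive_class_beq in Hinv.
    rewrite <- (winv_involutive (firstn 3 w)), <- Hinv, vsame_delta_inv. apply IH.
  - apply positive_class_beq in Hd. rewrite <- Hd, vsame_delta. apply IH.
  - rewrite firstn_skipn. specialize (IH w' (g ++ [l])). now rewrite <- !app_assoc in IH.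
Qed.

Definition coset_quotient (u v : word) : word :=
  let w := free_reduce (winv u ++ v) in
  to_positive 0 (free_reduce (strip_delta (length w) w)).

Lemma coset_quotient_spec g u v : vsame ((g ++ u) ++ coset_quotient u v) (g ++ v).
Proof.
  unfold coset_quotient. set (w := free_reduce (winv u ++ v)).
  rewrite <- to_positive_spec, rot_pow_0, <- free_reduce_beq, <- strip_delta_spec.
  unfold w. rewrite <- free_reduce_beq, <- app_assoc, app_winv_r_cancel. reflexivity.
Qed.

Definition delta_power_classes : list (list word) :=
  map (fun k => positive_class (dpow k)) [0; 1; 2]%Z.

(* The invariant test is cheap and rules out most pairs before the search; the
   exponent sum of the positive quotient tells which power of delta it could be. *)
Definition coset_equal (u v : word) : bool :=
  negb (coset_separated u v) &&
  let p := coset_quotient u v in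
  let C := nth (Z.to_nat (exponent_sum p / 3)) delta_power_classes [] in
  if in_dec word_eq_dec p C then true else false.

Lemma coset_equal_spec u v : coset_equal u v = true -> forall g, vsame (g ++ u) (g ++ v).
Proof.
  unfold coset_equal. intros [_ H]%andb_prop g. cbv zeta in H.
  destruct in_dec as [Hin | _]; [|discriminate].
  assert (Hk : exists k, In (coset_quotient u v) (positive_class (dpow k))).
  { revert Hin. generalize (Z.to_nat (exponent_sum (coset_quotient u v) / 3)). intros m Hin.
    destruct (Nat.lt_ge_cases m (length delta_power_classes)) as [Hm | Hm].
    - apply (nth_In _ []), in_map_iff in Hm as (k & HC & _). exists k. now rewrite HC.
    - now rewrite nth_overflow in Hin. }
  destruct Hk as [k Hin'].
  apply positive_class_beq in Hin'.
  rewrite <- (coset_quotient_spec g u v), <- Hin'. exists k. reflexivity.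
Qed.

Lemma coset_equal_nil_l u g : coset_equal [] u = true -> vsame g (g ++ u).
Proof. intros H. rewrite <- (app_nil_r g) at 1. exact (coset_equal_spec _ _ H g). Qed.

(** * Faces up to the coset relation *)

Definition translate (w : word) (F : face) : face :=
  match F with Tri g x y z => Tri (w ++ g) x y z | Loz g u v => Loz (w ++ g) u v end.

Definition translate_edge (w : word) (e : edge) : edge := Edge (w ++ e_base e) (e_atom e).

Definition face_base (F : face) : word := match F with Tri g _ _ _ | Loz g _ _ => g end.

Definition at_origin (F : face) : face :=
  match F with Tri _ x y z => Tri [] x y z | Loz _ u v => Loz [] u v end.

Lemma face_vertices_translate w F :
  face_vertices (translate w F) = map (app w) (face_vertices F).
Proof. destruct F; simpl; now rewrite <- !app_assoc. Qed.

Lemma face_vertices_at_origin F :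
  face_vertices F = map (app (face_base F)) (face_vertices (at_origin F)).
Proof. destruct F; simpl; now rewrite app_nil_r. Qed.

Lemma face_edges_translate w F :
  face_edges (translate w F) = map (translate_edge w) (face_edges F).
Proof. destruct F; unfold translate_edge; simpl; now rewrite <- !app_assoc. Qed.

Lemma translate_app u v F : translate (u ++ v) F = translate u (translate v F).
Proof. destruct F; simpl; now rewrite app_assoc. Qed.

Lemma isFace_translate w F : isFace (translate w F) <-> isFace F.
Proof. now destruct F. Qed.

Lemma e_src_translate w e : e_src (translate_edge w e) = w ++ e_src e.
Proof. reflexivity. Qed.

Lemma e_tgt_translate w e : e_tgt (translate_edge w e) = w ++ e_tgt e.
Proof. unfold e_tgt; simpl. now rewrite app_assoc. Qed.

Definition edge_ends (e : edge) : word * word := (e_src e, e_tgt e).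

Lemma vsame_translate_src w e : vsame (e_src (translate_edge w e)) (w ++ fst (edge_ends e)).
Proof. reflexivity. Qed.

Lemma vsame_translate_tgt w e : vsame (e_tgt (translate_edge w e)) (w ++ snd (edge_ends e)).
Proof. now rewrite e_tgt_translate. Qed.

Definition in_cosets (g : word) (R : list word) (x : word) : Prop :=
  exists r, In r R /\ vsame x (g ++ r).

Lemma vIn_in_cosets x F g R :
  face_vertices F = map (app g) R -> vIn x F <-> in_cosets g R x.
Proof.
  intros HF. unfold vIn, in_cosets. rewrite HF. split.
  - intros (h & (r & <- & Hr)%in_map_iff & Hx). eauto.
  - intros (r & Hr & Hx). exists (g ++ r). split; [now apply in_map|exact Hx].
Qed.

Lemma in_cosets_map g w f R x : (forall r, In r R -> vsame (g ++ r) (w ++ f r)) ->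
  in_cosets g R x <-> in_cosets w (map f R) x.
Proof.
  intros Hf. split.
  - intros (r & Hr & Hx). exists (f r). split; [now apply in_map|]. now rewrite Hx, Hf.
  - intros (t & (r & <- & Hr)%in_map_iff & Hx). exists r. split; [exact Hr|]. now rewrite Hx, Hf.
Qed.

Lemma vIn_vsame x y F : vsame x y -> vIn y F -> vIn x F.
Proof. intros Hxy (h & Hh & Hy). exists h. split; [exact Hh|]. now rewrite Hxy. Qed.

Lemma faceEq_iff F G : faceEq F G <-> forall x, vIn x F <-> vIn x G.
Proof.
  split.
  - intros [HFG HGF] x. split; intros (h & Hh & Hx); eapply vIn_vsame; eauto.
  - intros H. split; intros h Hh; apply H; exists h; split; auto; reflexivity.
Qed.

#[local] Instance faceEq_equivalence : Equivalence faceEq.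
Proof.
  split.
  - intros F. now apply faceEq_iff.
  - intros F G H. apply faceEq_iff. intros x. symmetry. now apply faceEq_iff.
  - intros F G K H1 H2. apply faceEq_iff. intros x.
    rewrite faceEq_iff in H1, H2. now rewrite H1, H2.
Qed.

Definition cosets_included (R T : list word) : bool :=
  forallb (fun r => existsb (coset_equal r) T) R.

Definition same_cosets (R T : list word) : bool := cosets_included R T && cosets_included T R.

Lemma cosets_included_spec R T g x :
  cosets_included R T = true -> in_cosets g R x -> in_cosets g T x.
Proof.
  intros H (r & Hr & Hx). unfold cosets_included in H. rewrite forallb_forall in H.
  apply H, existsb_exists in Hr as (t & Ht & Hrt).
  exists t. split; [exact Ht|]. now rewrite Hx, (coset_equal_spec r t Hrt g).
Qed.

Lemma same_cosets_spec R T g x : same_cosets R T = true -> in_cosets g R x <-> in_cosets g T x.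
Proof.
  intros [H1 H2]%andb_prop. split; apply cosets_included_spec; assumption.
Qed.

Lemma same_cosets_faceEq w F G :
  same_cosets (face_vertices F) (face_vertices G) = true -> faceEq (translate w F) (translate w G).
Proof.
  intros H. apply faceEq_iff. intros x.
  rewrite !(vIn_in_cosets x _ w _ (face_vertices_translate _ _)). now apply same_cosets_spec.
Qed.

Definition separated_from_all (u : word) (T : list word) : bool := forallb (coset_separated u) T.

Lemma separated_from_all_spec u T g : separated_from_all u T = true -> ~ in_cosets g T (g ++ u).
Proof.
  intros H (t & Ht & Hx). unfold separated_from_all in H. rewrite forallb_forall in H.
  exact (coset_separated_spec u t (H t Ht) g Hx).
Qed.

Definition same_edge_cosets (p q : word * word) : bool :=
  (coset_equal (fst p) (fst q) && coset_equal (snd p) (snd q)) ||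
  (coset_equal (fst p) (snd q) && coset_equal (snd p) (fst q)).

Lemma vsame_of_coset_equal a b w x y :
  vsame a (w ++ x) -> vsame b (w ++ y) -> coset_equal x y = true -> vsame a b.
Proof.
  intros Ha Hb H. transitivity (w ++ x); [exact Ha|].
  transitivity (w ++ y); [exact (coset_equal_spec x y H w) | now symmetry].
Qed.

Lemma same_edge_cosets_edgeEq w e f p q :
  vsame (e_src e) (w ++ fst p) -> vsame (e_tgt e) (w ++ snd p) ->
  vsame (e_src f) (w ++ fst q) -> vsame (e_tgt f) (w ++ snd q) ->
  same_edge_cosets p q = true -> edgeEq e f.
Proof.
  intros He1 He2 Hf1 Hf2 H. unfold same_edge_cosets in H.
  apply orb_prop in H as [[H1 H2]%andb_prop | [H1 H2]%andb_prop];
    [left | right]; split.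
  - exact (vsame_of_coset_equal _ _ w _ _ He1 Hf1 H1).
  - exact (vsame_of_coset_equal _ _ w _ _ He2 Hf2 H2).
  - exact (vsame_of_coset_equal _ _ w _ _ He1 Hf2 H1).
  - exact (vsame_of_coset_equal _ _ w _ _ He2 Hf1 H2).
Qed.

Lemma edgeEq_sym e f : edgeEq e f -> edgeEq f e.
Proof. intros [[H1 H2] | [H1 H2]]; [left | right]; split; now symmetry. Qed.

Lemma edgeEq_trans e f g : edgeEq e f -> edgeEq f g -> edgeEq e g.
Proof.
  intros [[H1 H2] | [H1 H2]] [[H3 H4] | [H3 H4]];
    [left | right | right | left]; split; etransitivity; eassumption.
Qed.

Lemma eIn_edgeEq e f F : edgeEq e f -> eIn f F -> eIn e F.
Proof.
  intros Hef (h & Hh & Hf). exists h. split; [exact Hh|]. eapply edgeEq_trans; eassumption.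
Qed.

Lemma vIn_vertex h F : In h (face_vertices F) -> vIn h F.
Proof. intros H. exists h. split; [exact H | reflexivity]. Qed.

Lemma triangle_closes g x y z :
  beq [pos x; pos y; pos z] delta -> vsame g (g ++ [pos x; pos y] ++ [pos z]).
Proof.
  intros H. exists 1%Z. change (dpow 1) with (delta ++ []).
  change ([pos x; pos y] ++ [pos z]) with [pos x; pos y; pos z].
  now rewrite app_nil_r, H.
Qed.

Lemma lozenge_commutes g u v :
  isFace (Loz g u v) -> vsame (g ++ [pos v] ++ [pos u]) (g ++ [pos u; pos v]).
Proof.
  intros H. apply vsame_of_beq, app_beq_proper; [reflexivity|]. simpl.
  destruct H as [[-> ->] | [[-> ->] | [[-> ->] | [-> ->]]]];
    [symmetry | | symmetry |]; apply bkl_relations_beq; simpl; pick_disjunct.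
Qed.

Lemma face_edge_ends_in_face F f :
  isFace F -> In f (face_edges F) -> vIn (e_src f) F /\ vIn (e_tgt f) F.
Proof.
  intros HF Hf. destruct F as [g x y z | g u v]; simpl in Hf;
    repeat destruct Hf as [<- | Hf]; try contradiction; unfold e_src, e_tgt; simpl;
    rewrite <- ?app_assoc; split; try (apply vIn_vertex; simpl; tauto).
  - apply (vIn_vsame _ g); [|apply vIn_vertex; simpl; tauto].
    symmetry. apply triangle_closes, HF.
  - apply (vIn_vsame _ (g ++ [pos u; pos v])); [|apply vIn_vertex; simpl; tauto].
    now apply lozenge_commutes.
Qed.

Lemma eIn_ends_in_face e F : isFace F -> eIn e F -> vIn (e_src e) F /\ vIn (e_tgt e) F.
Proof.
  intros HF (f & Hf & [[H1 H2] | [H1 H2]]);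
    destruct (face_edge_ends_in_face F f HF Hf) as [V1 V2]; split; eapply vIn_vsame; eassumption.
Qed.

Definition origin_faces : list face :=
  [Tri [] a21 a41 a43; Tri [] a32 a21 a41; Tri [] a43 a32 a21; Tri [] a41 a43 a32;
   Loz [] a43 a21; Loz [] a21 a43; Loz [] a41 a32; Loz [] a32 a41].

Lemma at_origin_in_origin_faces F : isFace F -> In (at_origin F) origin_faces.
Proof.
  destruct F as [g x y z | g u v]; simpl.
  - intros (Hx & Hy & Hz & Hxyz). unfold side in *.
    destruct Hx as [-> | [-> | [-> | ->]]]; destruct Hy as [-> | [-> | [-> | ->]]];
      destruct Hz as [-> | [-> | [-> | ->]]]; try (simpl; tauto); exfalso;
      refine (coset_separated_spec _ delta _ [] (vsame_of_beq _ _ Hxyz)); vm_compute; reflexivity.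
  - intros [[-> ->] | [[-> ->] | [[-> ->] | [-> ->]]]]; simpl; tauto.
Qed.

(** * The star of a vertex *)

Lemma forallb_seq (P : nat -> bool) n : forallb P (seq 0 n) = true -> forall i, i < n -> P i = true.
Proof. rewrite forallb_forall. intros H i Hi. apply H, in_seq. lia. Qed.

Lemma existsb_seq (P : nat -> bool) n : existsb P (seq 0 n) = true -> exists i, i < n /\ P i = true.
Proof. intros (i & Hi%in_seq & HP)%existsb_exists. exists i. split; [lia | exact HP]. Qed.

(* The twelve faces and eight edges of X containing the vertex [[]]; only the
   indices below 12 and 8 are meant. *)
Definition star_face (i : nat) : face :=
  match i with
  | 0 => Tri [] a21 a41 a43 | 1 => Tri [] a32 a21 a41
  | 2 => Tri [] a43 a32 a21 | 3 => Tri [] a41 a43 a32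
  | 4 => Loz [] a43 a21 | 5 => Loz [ngt a43] a43 a21
  | 6 => Loz [ngt a21] a43 a21 | 7 => Loz [ngt a21; ngt a43] a43 a21
  | 8 => Loz [] a41 a32 | 9 => Loz [ngt a41] a41 a32
  | 10 => Loz [ngt a32] a41 a32 | _ => Loz [ngt a32; ngt a41] a41 a32
  end.

Definition star_edge (j : nat) : edge :=
  match j with
  | 0 => Edge [] a21 | 1 => Edge [ngt a32] a32 | 2 => Edge [] a32 | 3 => Edge [ngt a43] a43
  | 4 => Edge [] a43 | 5 => Edge [ngt a41] a41 | 6 => Edge [] a41 | _ => Edge [ngt a21] a21
  end.

(* The three star faces containing star edge [j]. *)
Definition star_incidence (j : nat) : list nat :=
  match j with
  | 0 => [0; 4; 5] | 1 => [0; 10; 11] | 2 => [1; 8; 9] | 3 => [1; 7; 5]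
  | 4 => [2; 4; 6] | 5 => [2; 9; 11] | 6 => [3; 8; 10] | _ => [3; 6; 7]
  end.

Lemma star_face_isFace i w : i < 12 -> isFace (translate w (star_face i)).
Proof.
  intros Hi. apply isFace_translate.
  do 12 (destruct i as [|i]; [simpl; unfold side; try tauto;
    repeat split; try tauto; apply positive_class_beq; vm_compute; tauto|]); lia.
Qed.

Lemma star_edge_isEdge j w : isEdge (translate_edge w (star_edge j)).
Proof. unfold isEdge, side. do 8 (destruct j as [|j]; [simpl; tauto|]); simpl; tauto. Qed.

Lemma star_center_check :
  forallb (fun i => existsb (coset_equal []) (face_vertices (star_face i))) (seq 0 12) &&
  forallb (fun j => coset_equal [] (e_src (star_edge j)) || coset_equal [] (e_tgt (star_edge j)))
    (seq 0 8) = true.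
Proof. vm_compute. reflexivity. Qed.

Lemma star_face_center i w : i < 12 -> vIn w (translate w (star_face i)).
Proof.
  intros Hi. destruct (andb_prop _ _ star_center_check) as [H _].
  apply (forallb_seq _ _ H), existsb_exists in Hi as (r & Hr & Hc).
  apply (vIn_in_cosets _ _ w _ (face_vertices_translate _ _)).
  exists r. split; [exact Hr|]. exact (coset_equal_nil_l _ _ Hc).
Qed.

Lemma star_edge_center j w : j < 8 -> vOnEdge w (translate_edge w (star_edge j)).
Proof.
  intros Hj. destruct (andb_prop _ _ star_center_check) as [_ H].
  apply (forallb_seq _ _ H), orb_prop in Hj. unfold vOnEdge.
  rewrite e_src_translate, e_tgt_translate.
  destruct Hj as [Hc | Hc]; [left | right]; exact (coset_equal_nil_l _ _ Hc).
Qed.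

Lemma star_face_classification_check :
  forallb (fun F0 => forallb (fun q => forallb (fun j =>
    existsb (fun i => same_cosets (map (fun r => rot_pow j (winv q ++ r)) (face_vertices F0))
                                  (face_vertices (star_face i))) (seq 0 12))
    (seq 0 4)) (face_vertices F0)) origin_faces = true.
Proof. vm_compute. reflexivity. Qed.

Lemma vsame_shift_offset q h w j :
  (forall s, vsame ((h ++ q) ++ s) (w ++ rot_pow j s)) ->
  forall r, vsame (h ++ r) (w ++ rot_pow j (winv q ++ r)).
Proof. intros Hs r. now rewrite <- Hs, <- app_assoc, app_winv_r_cancel. Qed.

Lemma star_face_classify w F :
  isFace F -> vIn w F -> exists i, i < 12 /\ faceEq F (translate w (star_face i)).
Proof.
  intros HF (h & Hh & Hw).
  rewrite face_vertices_at_origin in Hh. apply in_map_iff in Hh as (q & <- & Hq).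
  destruct (vsame_shift _ _ (symmetry Hw)) as (j & Hj & Hshift).
  pose proof star_face_classification_check as C.
  rewrite forallb_forall in C. specialize (C _ (at_origin_in_origin_faces F HF)).
  rewrite forallb_forall in C. specialize (C q Hq).
  apply forallb_seq with (i := j), existsb_seq in C as (i & Hi & Hsame); [|exact Hj].
  exists i. split; [exact Hi|]. apply faceEq_iff. intros x.
  rewrite (vIn_in_cosets x F _ _ (face_vertices_at_origin F)),
    (vIn_in_cosets x _ w _ (face_vertices_translate _ _)),
    (in_cosets_map _ w _ _ _ (fun r _ => vsame_shift_offset _ _ _ _ Hshift r)).
  exact (same_cosets_spec _ _ w x Hsame).
Qed.

Lemma star_edge_classification_check :
  forallb (fun a => forallb (fun q => forallb (fun j =>
    existsb (fun j' => same_edge_cosets (rot_pow j (winv q ++ []), rot_pow j (winv q ++ [pos a]))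
                                        (edge_ends (star_edge j'))) (seq 0 8))
    (seq 0 4)) [[]; [pos a]]) [a21; a32; a43; a41] = true.
Proof. vm_compute. reflexivity. Qed.

Lemma star_edge_classify w e :
  isEdge e -> vOnEdge w e -> exists j, j < 8 /\ edgeEq e (translate_edge w (star_edge j)).
Proof.
  destruct e as [h a]. unfold isEdge, vOnEdge, e_src, e_tgt; simpl. intros Ha Hw.
  assert (Hq : exists q, In q [[]; [pos a]] /\ vsame (h ++ q) w).
  { destruct Hw as [Hw | Hw]; [exists [] | exists [pos a]]; split; simpl; auto.
    all: symmetry; now rewrite ?app_nil_r. }
  destruct Hq as (q & Hq & Hhq).
  destruct (vsame_shift _ _ Hhq) as (j & Hj & Hshift).
  pose proof star_edge_classification_check as C.
  assert (Ha' : In a [a21; a32; a43; a41])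
    by (destruct Ha as [-> | [-> | [-> | ->]]]; simpl; tauto).
  rewrite forallb_forall in C. specialize (C a Ha').
  rewrite forallb_forall in C. specialize (C q Hq).
  apply forallb_seq with (i := j), existsb_seq in C as (j' & Hj' & Hsame); [|exact Hj].
  exists j'. split; [exact Hj'|].
  apply (same_edge_cosets_edgeEq w (Edge h a) _
           (rot_pow j (winv q ++ []), rot_pow j (winv q ++ [pos a])) (edge_ends (star_edge j')));
    [| exact (vsame_shift_offset _ _ _ _ Hshift [pos a]) | | | exact Hsame].
  - unfold e_src; simpl. rewrite <- (app_nil_r h) at 1.
    exact (vsame_shift_offset _ _ _ _ Hshift []).
  - exact (vsame_translate_src w (star_edge j')).
  - exact (vsame_translate_tgt w (star_edge j')).
Qed.

Lemma star_incidence_lt j i : In i (star_incidence j) -> i < 12.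
Proof.
  do 7 (destruct j as [|j]; [simpl; intuition lia|]). simpl; intuition lia.
Qed.

Lemma star_incidence_check :
  forallb (fun j => forallb (fun i =>
    if in_dec Nat.eq_dec i (star_incidence j) then
      existsb (fun f => same_edge_cosets (edge_ends (star_edge j)) (edge_ends f))
        (face_edges (star_face i))
    else
      separated_from_all (e_src (star_edge j)) (face_vertices (star_face i)) ||
      separated_from_all (e_tgt (star_edge j)) (face_vertices (star_face i)))
    (seq 0 12)) (seq 0 8) = true.
Proof. vm_compute. reflexivity. Qed.

Lemma star_edge_in_star_face w j i : j < 8 -> In i (star_incidence j) ->
  eIn (translate_edge w (star_edge j)) (translate w (star_face i)).
Proof.
  intros Hj Hi. pose proof (star_incidence_lt j i Hi) as Hi12.
  pose proof (forallb_seq _ _ (forallb_seq _ _ star_incidence_check j Hj) i Hi12) as H.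
  cbv beta in H. destruct in_dec as [_ | []]; [|exact Hi].
  apply existsb_exists in H as (f & Hf & Hsame).
  exists (translate_edge w f). rewrite face_edges_translate. split; [now apply in_map|].
  apply (same_edge_cosets_edgeEq w _ _ _ _ (vsame_translate_src w (star_edge j))
           (vsame_translate_tgt w (star_edge j)) (vsame_translate_src w f)
           (vsame_translate_tgt w f) Hsame).
Qed.

Lemma star_edge_not_in_star_face w j i : j < 8 -> i < 12 -> ~ In i (star_incidence j) ->
  ~ (vIn (e_src (translate_edge w (star_edge j))) (translate w (star_face i)) /\
     vIn (e_tgt (translate_edge w (star_edge j))) (translate w (star_face i))).
Proof.
  intros Hj Hi Hni [V1 V2].
  pose proof (forallb_seq _ _ (forallb_seq _ _ star_incidence_check j Hj) i Hi) as H.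
  cbv beta in H. destruct in_dec as [| _]; [contradiction|].
  rewrite e_src_translate, (vIn_in_cosets _ _ w _ (face_vertices_translate _ _)) in V1.
  rewrite e_tgt_translate, (vIn_in_cosets _ _ w _ (face_vertices_translate _ _)) in V2.
  apply orb_prop in H as [H | H]; eapply separated_from_all_spec; eassumption.
Qed.

Lemma star_faces_distinct_check :
  forallb (fun a => forallb (fun b => Nat.eqb a b ||
    existsb (fun r => separated_from_all r (face_vertices (star_face b)))
      (face_vertices (star_face a))) (seq 0 12)) (seq 0 12) = true.
Proof. vm_compute. reflexivity. Qed.

Lemma star_face_injective w a b : a < 12 -> b < 12 ->
  faceEq (translate w (star_face a)) (translate w (star_face b)) -> a = b.
Proof.
  intros Ha Hb Hab.
  pose proof (forallb_seq _ _ (forallb_seq _ _ star_faces_distinct_check a Ha) b Hb) as H.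
  apply orb_prop in H as [H%Nat.eqb_eq | (r & Hr & Hsep)%existsb_exists]; [exact H|].
  exfalso. apply (separated_from_all_spec _ _ w Hsep).
  apply (vIn_in_cosets _ _ w _ (face_vertices_translate _ _)).
  rewrite faceEq_iff in Hab. apply Hab.
  apply vIn_vertex. rewrite face_vertices_translate. now apply in_map.
Qed.

Lemma star_faces_at_edge w j F : j < 8 -> isFace F ->
  eIn (translate_edge w (star_edge j)) F ->
  exists i, In i (star_incidence j) /\ faceEq F (translate w (star_face i)).
Proof.
  intros Hj HF He. destruct (eIn_ends_in_face _ _ HF He) as [V1 V2].
  assert (Vw : vIn w F).
  { destruct (star_edge_center j w Hj) as [H | H]; eapply vIn_vsame; eassumption. }
  destruct (star_face_classify w F HF Vw) as (i & Hi & HFi). exists i. split; [|exact HFi].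
  destruct (in_dec Nat.eq_dec i (star_incidence j)) as [Hin | Hnin]; [exact Hin|].
  exfalso. apply (star_edge_not_in_star_face w j i Hj Hi Hnin).
  rewrite faceEq_iff in HFi. now rewrite <- !HFi.
Qed.

(** * Hamiltonian surfaces *)

Definition bit (l : list bool) (i : nat) : bool := nth i l false.

Definition mem (i : nat) (I : list nat) : bool := existsb (Nat.eqb i) I.

Lemma mem_spec i I : mem i I = true <-> In i I.
Proof.
  unfold mem. rewrite existsb_exists. split.
  - intros (x & Hx & ->%Nat.eqb_eq). exact Hx.
  - intros H. exists i. split; [exact H | apply Nat.eqb_refl].
Qed.

Definition exactly_two (l : list bool) (I : list nat) : bool :=
  existsb (fun a => existsb (fun b => negb (a =? b) &&
    forallb (fun i => Bool.eqb (bit l i) ((i =? a) || (i =? b))) I) I) I.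

Definition cut_closed (X C : list nat) : bool :=
  forallb (fun j => let I := star_incidence j in
    forallb (fun a => forallb (fun b =>
      mem a X || mem b X || Bool.eqb (mem a C) (mem b C)) I) I) (seq 0 8).

Lemma cut_closed_spec X C j a b : cut_closed X C = true -> j < 8 ->
  In a (star_incidence j) -> In b (star_incidence j) -> mem a X = false -> mem b X = false ->
  mem a C = mem b C.
Proof.
  intros Hcut Hj Ha Hb HaX HbX.
  pose proof (forallb_seq _ _ Hcut j Hj) as H. cbv beta zeta in H.
  rewrite forallb_forall in H. specialize (H a Ha). rewrite forallb_forall in H.
  specialize (H b Hb). rewrite HaX, HbX in H. now apply eqb_true_iff.
Qed.

(* A cut [(X, C, f, g)]: once the faces [X] are removed, no star edge lies in
   a face of [C] and a face outside [C]; [f] is in [C], [g] is not.  These are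
   the two ways in which the faces of a surface at a vertex could split into
   two 4-cycles of the link. *)
Definition link_cuts : list (list nat * list nat * nat * nat) :=
  [([0; 1; 2; 3], [4; 5; 6; 7], 4, 8); ([5; 6; 9; 10], [0; 11; 2; 4], 0, 1)].

Lemma link_cuts_check :
  forallb (fun '(X, C, f, g) => cut_closed X C && mem f C && negb (mem g C) &&
    forallb (fun i => i <? 12) (f :: g :: X)) link_cuts = true.
Proof. vm_compute. reflexivity. Qed.

Definition splits (l : list bool) (c : list nat * list nat * nat * nat) : bool :=
  let '(X, C, f, g) := c in forallb (fun i => negb (bit l i)) X && bit l f && bit l g.

Definition two_per_edge (l : list bool) : bool :=
  forallb (fun j => exactly_two l (star_incidence j)) (seq 0 8).

Definition link_admissible (l : list bool) : bool :=
  two_per_edge l && forallb (fun c => negb (splits l c)) link_cuts.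

Definition propagation_rules (l : list bool) : bool :=
  (bit l 2 || (negb (bit l 8) && bit l 6)) && (bit l 9 || negb (bit l 4)) &&
  (bit l 5 || negb (bit l 8)).

Fixpoint bool_lists (n : nat) : list (list bool) :=
  match n with
  | O => [[]]
  | S n => flat_map (fun l => [true :: l; false :: l]) (bool_lists n)
  end.

Lemma bool_lists_complete l : In l (bool_lists (length l)).
Proof.
  induction l as [|b l IH]; simpl; [tauto|].
  apply in_flat_map. exists l. split; [exact IH | destruct b; simpl; tauto].
Qed.

Lemma link_admissible_check :
  forallb (fun l => negb (link_admissible l) || propagation_rules l) (bool_lists 12) = true.
Proof. vm_compute. reflexivity. Qed.

Lemma propagation_rules_of_admissible l :
  length l = 12 -> link_admissible l = true -> propagation_rules l = true.
Proof.
  intros Hl Hh. pose proof link_admissible_check as H. rewrite forallb_forall in H.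
  rewrite <- Hl in H. specialize (H l (bool_lists_complete l)).
  now rewrite Hh in H.
Qed.

Section SurfaceAtVertex.

Variable S : face -> Prop.
Hypothesis HS : HamiltonianSurface S.
Variable w : word.

Definition in_surface (i : nat) : bool :=
  if excluded_middle_informative (S (translate w (star_face i))) then true else false.

Lemma in_surface_spec i : in_surface i = true <-> S (translate w (star_face i)).
Proof. unfold in_surface. destruct excluded_middle_informative; split; easy. Qed.

Lemma surface_faceEq F G : S F -> isFace G -> faceEq F G -> S G.
Proof. destruct HS as [[_ Hclosed] _]. intros. eapply Hclosed; eassumption. Qed.

Lemma surface_star_face i F : S F -> i < 12 -> faceEq F (translate w (star_face i)) ->
  in_surface i = true.
Proof.
  intros HF Hi HFi. apply in_surface_spec. eapply surface_faceEq; eauto using star_face_isFace.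
Qed.

Lemma surface_two_faces_at_edge j : j < 8 -> exists a b, In a (star_incidence j) /\
  In b (star_incidence j) /\ a <> b /\
  forall i, In i (star_incidence j) -> (in_surface i = true <-> i = a \/ i = b).
Proof.
  intros Hj. destruct HS as [[Hface _] [_ [_ [Hcover [Htwo _]]]]].
  pose proof (star_edge_isEdge j w) as He.
  destruct (Htwo _ He (Hcover _ He)) as (F1 & F2 & S1 & S2 & E1 & E2 & N12 & Honly).
  destruct (star_faces_at_edge w j F1 Hj (Hface _ S1) E1) as (a & Ha & HFa).
  destruct (star_faces_at_edge w j F2 Hj (Hface _ S2) E2) as (b & Hb & HFb).
  exists a, b. split; [exact Ha|]. split; [exact Hb|]. split.
  { intros ->. apply N12. transitivity (translate w (star_face b)); [exact HFa | now symmetry]. }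
  intros i Hi. pose proof (star_incidence_lt j i Hi) as Hi12. split.
  - intros Si%in_surface_spec.
    destruct (Honly _ Si (star_edge_in_star_face w j i Hj Hi)) as [H | H]; [left | right].
    + apply (star_face_injective w i a Hi12 (star_incidence_lt j a Ha)).
      transitivity F1; [exact H | exact HFa].
    + apply (star_face_injective w i b Hi12 (star_incidence_lt j b Hb)).
      transitivity F2; [exact H | exact HFb].
  - intros [-> | ->].
    + exact (surface_star_face a F1 S1 (star_incidence_lt j a Ha) HFa).
    + exact (surface_star_face b F2 S2 (star_incidence_lt j b Hb) HFb).
Qed.

Lemma surface_not_split X C f g :
  cut_closed X C = true -> mem f C = true -> mem g C = false -> f < 12 -> g < 12 ->
  (forall i, In i X -> in_surface i = false) ->
  in_surface f = true -> in_surface g = true -> False.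
Proof.
  intros Hcut Hf Hg Hf12 Hg12 HX Sf Sg.
  pose proof HS as (( Hface & _) & _ & _ & _ & _ & Hdisk).
  set (P A := exists i, i < 12 /\ mem i C = true /\ faceEq A (translate w (star_face i))).
  assert (Hnot_X : forall i A, S A -> i < 12 -> faceEq A (translate w (star_face i)) ->
            mem i X = false).
  { intros i A SA Hi HA. apply not_true_iff_false. intros Hin%mem_spec.
    pose proof (HX i Hin) as Hoff. now rewrite (surface_star_face i A SA Hi HA) in Hoff. }
  assert (Hstep : forall A B, S A -> S B ->
            (exists e, isEdge e /\ vOnEdge w e /\ eIn e A /\ eIn e B) -> P A -> P B).
  { intros A B SA SB (e & He & Hwe & EA & EB) (i & Hi & HiC & HAi).
    destruct (star_edge_classify w e He Hwe) as (j & Hj & Hej).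
    destruct (star_faces_at_edge w j A Hj (Hface _ SA) (eIn_edgeEq _ _ _ (edgeEq_sym _ _ Hej) EA))
      as (a & Ha & HAa).
    destruct (star_faces_at_edge w j B Hj (Hface _ SB) (eIn_edgeEq _ _ _ (edgeEq_sym _ _ Hej) EB))
      as (b & Hb & HBb).
    pose proof (star_incidence_lt j a Ha) as Ha12. pose proof (star_incidence_lt j b Hb) as Hb12.
    assert (i = a) as <-.
    { apply (star_face_injective w i a Hi Ha12). transitivity A; [now symmetry | exact HAa]. }
    exists b. split; [exact Hb12|]. split; [|exact HBb].
    rewrite <- HiC. symmetry.
    exact (cut_closed_spec X C j i b Hcut Hj Ha Hb
             (Hnot_X i A SA Hi HAa) (Hnot_X b B SB Hb12 HBb)). }
  specialize (Hdisk w _ _ (proj1 (in_surface_spec f) Sf) (proj1 (in_surface_spec g) Sg)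
                (star_face_center f w Hf12) (star_face_center g w Hg12)).
  assert (Hg' : P (translate w (star_face g))).
  { assert (HPf : P (translate w (star_face f)))
      by (exists f; split; [exact Hf12 | split; [exact Hf | reflexivity]]).
    revert HPf. induction Hdisk as [F | F G H (SF & SG & _ & _ & Hshare) _ IH]; [exact id|].
    intros HF. apply IH. exact (Hstep F G SF SG Hshare HF). }
  destruct Hg' as (i & Hi & HiC & Hgi).
  rewrite <- (star_face_injective w i g Hi Hg12 (symmetry Hgi)), HiC in Hg. discriminate.
Qed.

Definition surface_pattern : list bool := map in_surface (seq 0 12).

Lemma bit_surface_pattern i : i < 12 -> bit surface_pattern i = in_surface i.
Proof.
  intros Hi. unfold bit, surface_pattern.
  rewrite (nth_indep _ _ (in_surface 0)) by (rewrite length_map, length_seq; exact Hi).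
  now rewrite map_nth, seq_nth.
Qed.

Lemma surface_pattern_two_per_edge : two_per_edge surface_pattern = true.
Proof.
  apply forallb_forall. intros j Hj%in_seq.
  destruct (surface_two_faces_at_edge j ltac:(lia)) as (a & b & Ha & Hb & Hab & Hon).
  apply existsb_exists. exists a. split; [exact Ha|].
  apply existsb_exists. exists b. split; [exact Hb|].
  apply andb_true_intro. split; [now apply negb_true_iff, Nat.eqb_neq|].
  apply forallb_forall. intros i Hi. apply eqb_true_iff.
  rewrite bit_surface_pattern by exact (star_incidence_lt j i Hi).
  apply eq_true_iff_eq. rewrite Hon by exact Hi.
  now rewrite orb_true_iff, !Nat.eqb_eq.
Qed.

Lemma surface_pattern_unsplit c : In c link_cuts -> splits surface_pattern c = false.
Proof.
  destruct c as [[[X C] f] g]. intros Hc.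
  pose proof link_cuts_check as Hvalid. rewrite forallb_forall in Hvalid.
  specialize (Hvalid _ Hc). cbv beta iota in Hvalid.
  apply andb_prop in Hvalid as [Hvalid Hbounds].
  apply andb_prop in Hvalid as [Hvalid HgC%negb_true_iff].
  apply andb_prop in Hvalid as [Hcut HfC].
  assert (Hlt : forall i, In i (f :: g :: X) -> i < 12).
  { intros i Hi. rewrite forallb_forall in Hbounds. now apply Nat.ltb_lt, Hbounds. }
  apply not_true_iff_false. unfold splits.
  intros [[HX Sf]%andb_prop Sg]%andb_prop. rewrite forallb_forall in HX.
  apply (surface_not_split X C f g Hcut HfC HgC (Hlt f ltac:(simpl; tauto))
           (Hlt g ltac:(simpl; tauto))).
  - intros i Hi. rewrite <- bit_surface_pattern by (apply Hlt; simpl; tauto).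
    now apply negb_true_iff, HX.
  - now rewrite <- bit_surface_pattern by (apply Hlt; simpl; tauto).
  - now rewrite <- bit_surface_pattern by (apply Hlt; simpl; tauto).
Qed.

Lemma surface_pattern_admissible : link_admissible surface_pattern = true.
Proof.
  apply andb_true_intro. split; [exact surface_pattern_two_per_edge|].
  apply forallb_forall. intros c Hc. now rewrite surface_pattern_unsplit.
Qed.

Lemma surface_star_rules :
  (~ S (translate w (star_face 2)) ->
     ~ S (translate w (star_face 8)) /\ S (translate w (star_face 6))) /\
  (~ S (translate w (star_face 9)) -> ~ S (translate w (star_face 4))) /\
  (~ S (translate w (star_face 5)) -> ~ S (translate w (star_face 8))).
Proof.
  pose proof (propagation_rules_of_admissible surface_pattern
                ltac:(unfold surface_pattern; now rewrite length_map, length_seq)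
                surface_pattern_admissible) as H.
  unfold propagation_rules in H. rewrite !bit_surface_pattern in H by lia.
  rewrite <- !in_surface_spec, !not_true_iff_false.
  destruct (in_surface 2), (in_surface 4), (in_surface 5), (in_surface 6), (in_surface 8),
    (in_surface 9); simpl in H; intuition congruence.
Qed.

End SurfaceAtVertex.

Definition star_triangle_offsets : list (word * face) :=
  [(delta ++ delta, Tri [] a21 a41 a43); (delta, Tri [] a32 a21 a41);
   ([], Tri [] a43 a32 a21); (delta ++ delta ++ delta, Tri [] a41 a43 a32)].

Lemma star_triangles_check :
  forallb (fun '(u, T) => same_cosets (face_vertices (translate u (star_face 2))) (face_vertices T))
    star_triangle_offsets = true.
Proof. vm_compute. reflexivity. Qed.

Lemma triangle_is_star_face F : isFace F -> isTriangle F ->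
  exists w, faceEq (translate w (star_face 2)) F.
Proof.
  intros HF HT. destruct F as [g x y z |]; [|contradiction].
  pose proof (at_origin_in_origin_faces _ HF) as H0.
  assert (Hu : exists u, In (u, Tri [] x y z) star_triangle_offsets).
  { simpl in H0. repeat destruct H0 as [H0 | H0]; try discriminate; try contradiction;
      injection H0 as <- <- <-; eexists; unfold star_triangle_offsets; simpl; pick_disjunct. }
  destruct Hu as [u Hu]. exists (g ++ u).
  pose proof star_triangles_check as H. rewrite forallb_forall in H. specialize (H _ Hu).
  rewrite translate_app. apply (same_cosets_faceEq g) in H.
  replace (Tri g x y z) with (translate g (Tri [] x y z)) by (simpl; now rewrite app_nil_r).
  exact H.
Qed.

(* [(u, i, v, k)]: star face [i] at [u] is star face [k] at [v]. *)
Definition shared_lozenges : list (word * nat * word * nat) :=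
  [([], 8, [pos a41], 9); ([pos a41], 4, [pos a41; pos a43], 5); ([pos a41; pos a43], 8, [], 6)].

Lemma shared_lozenges_check :
  forallb (fun '(u, i, v, k) =>
    same_cosets (face_vertices (translate u (star_face i)))
                (face_vertices (translate v (star_face k))))
    shared_lozenges = true.
Proof. vm_compute. reflexivity. Qed.

Lemma shared_lozenge w u i v k : In (u, i, v, k) shared_lozenges ->
  faceEq (translate w (translate u (star_face i))) (translate w (translate v (star_face k))).
Proof.
  intros Hin. pose proof shared_lozenges_check as H. rewrite forallb_forall in H.
  exact (same_cosets_faceEq w _ _ (H _ Hin)).
Qed.

Lemma surface_star_triangle S w : HamiltonianSurface S -> S (translate w (star_face 2)).
Proof.
  intros HS. destruct (excluded_middle_informative (S (translate w (star_face 2)))) as [|N2];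
    [assumption | exfalso].
  set (w1 := w ++ [pos a41]). set (w2 := w ++ [pos a41; pos a43]).
  assert (E1 : faceEq (translate w (star_face 8)) (translate w1 (star_face 9)))
    by (unfold w1; rewrite translate_app; apply (shared_lozenge w [] 8 [pos a41] 9); simpl; tauto).
  assert (E2 : faceEq (translate w1 (star_face 4)) (translate w2 (star_face 5))).
  { unfold w1, w2. rewrite !translate_app.
    apply (shared_lozenge w [pos a41] 4 [pos a41; pos a43] 5); simpl; tauto. }
  assert (E3 : faceEq (translate w2 (star_face 8)) (translate w (star_face 6))).
  { unfold w2. rewrite !translate_app.
    apply (shared_lozenge w [pos a41; pos a43] 8 [] 6); simpl; tauto. }
  destruct (surface_star_rules S HS w) as [R2 _]. destruct (R2 N2) as [N8 S6].
  destruct (surface_star_rules S HS w1) as (_ & R9 & _).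
  destruct (surface_star_rules S HS w2) as (_ & _ & R5).
  assert (N9 : ~ S (translate w1 (star_face 9))).
  { intros H9. apply N8.
    exact (surface_faceEq S HS _ _ H9 (star_face_isFace 8 w ltac:(lia)) (symmetry E1)). }
  assert (N5 : ~ S (translate w2 (star_face 5))).
  { intros H5. apply (R9 N9).
    exact (surface_faceEq S HS _ _ H5 (star_face_isFace 4 w1 ltac:(lia)) (symmetry E2)). }
  apply (R5 N5).
  exact (surface_faceEq S HS _ _ S6 (star_face_isFace 8 w2 ltac:(lia)) (symmetry E3)).
Qed.

Theorem mainTheorem7 :
  forall (S : face -> Prop), HamiltonianSurface S ->
  forall F : face, isFace F -> isTriangle F -> S F.
Proof.
  intros S HS F HF HT. destruct (triangle_is_star_face F HF HT) as [w Hw].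
  exact (surface_faceEq S HS _ _ (surface_star_triangle S w HS) HF Hw).
Qed.
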